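(* Fix $\lambda^\sharp>0$ and let $(\gamma^\sharp,\lambda^\sharp)$ and $(\gamma^\flat,\lambda^\sharp)$ be two eligible pairs. Then $\|\Sigma_{-1,-1}^{1/2}(\gamma^\sharp-\gamma^\flat)\|_2^2\to0$.
   Context: Asymptotic framework: all quantities may depend on $n$; limits as $n\to\infty$. $\mathbf{x}=(\mathbf{x}_1,\dots,\mathbf{x}_p)$ is a zero-mean Gaussian row vector with nonsingular covariance $\Sigma$; $\mathbf{x}_{-1}=(\mathbf{x}_2,\dots,\mathbf{x}_p)$, $\Sigma_{-1,-1}=\mathbb{E}\mathbf{x}_{-1}^T\mathbf{x}_{-1}$, $\gamma^0:=\Sigma_{-1,-1}^{-1}\mathbb{E}\mathbf{x}_{-1}^T\mathbf{x}_1$. A pair $(\gamma,\lambda)$ with $\gamma\in\mathbb{R}^{p-1}$, $\lambda>0$ is eligible if $\|\Sigma_{-1,-1}(\gamma-\gamma^0)\|_\infty\le\lambda$ and $\lambda\|\gamma\|_1\to0$. *)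

From mathcomp Require Import all_boot all_order all_algebra.
From mathcomp Require Import all_classical all_reals all_analysis.
Set Implicit Arguments. Unset Strict Implicit. Unset Printing Implicit Defensive.
Import Order.TTheory GRing.Theory Num.Theory.
Local Open Scope classical_set_scope.
Local Open Scope ring_scope.

(* Coordinates are indexed 0..q with q = p - 1; coordinate 0 is x_1, the
   block of coordinates 1..q is x_{-1}.  A covariance matrix is a p x p
   matrix with p = 1 + q. *)

Definition norm1 (R : realType) (q : nat) (v : 'cV[R]_q) : R :=
  \sum_(i < q) `|v i 0|.

Definition normInf (R : realType) (q : nat) (v : 'cV[R]_q) : R :=
  \big[Num.max/0]_(i < q) `|v i 0|.

(** Sigma is the (nonsingular) covariance matrix of a zero-mean Gaussian
    vector: symmetric, positive semidefinite and invertible.  (Every such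
    matrix is the covariance of a nondegenerate Gaussian and conversely.) *)
Definition nonsingular_cov (R : realType) (q : nat) (S : 'M[R]_(1 + q)) : Prop :=
  S^T = S /\ (forall v : 'cV[R]_(1 + q), 0 <= (v^T *m S *m v) 0 0) /\ S \in unitmx.

Definition Sig_mm (R : realType) (q : nat) (S : 'M[R]_(1 + q)) : 'M[R]_q :=
  drsubmx (S : 'M[R]_(1 + q, 1 + q)).

(** E x_{-1}^T x_1 *)
Definition Sig_m1 (R : realType) (q : nat) (S : 'M[R]_(1 + q)) : 'cV[R]_q :=
  dlsubmx (S : 'M[R]_(1 + q, 1 + q)).

Definition gamma0 (R : realType) (q : nat) (S : 'M[R]_(1 + q)) : 'cV[R]_q :=
  invmx (Sig_mm S) *m Sig_m1 S.

Definition eligible (R : realType) (q : nat -> nat)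
    (S : forall n, 'M[R]_(1 + q n)) (g : forall n, 'cV[R]_(q n)) (lam : nat -> R)
    : Prop :=
  (forall n, 0 < lam n) /\
  (forall n, normInf (Sig_mm (S n) *m (g n - gamma0 (S n))) <= lam n) /\
  ((fun n => lam n * norm1 (g n)) @ \oo -->  0).

(** || Sigma_{-1,-1}^{1/2} d ||_2^2, written out as d^T Sigma_{-1,-1} d *)
Definition sq_Snorm (R : realType) (q : nat) (S : 'M[R]_(1 + q)) (d : 'cV[R]_q) : R :=
  (d^T *m Sig_mm S *m d) 0 0.

From mathcomp Require Import all_boot all_order all_algebra.
From mathcomp Require Import all_classical all_reals all_analysis.
From mathcomp Require Import lra.
Set Implicit Arguments. Unset Strict Implicit. Unset Printing Implicit Defensive.
Import Order.TTheory GRing.Theory Num.Theory.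
Local Open Scope classical_set_scope.
Local Open Scope ring_scope.

(* With d := γ# - γ♭, the quadratic form d^T Σ_{-1,-1} d splits as
   d^T Σ_{-1,-1} (γ# - γ0) - d^T Σ_{-1,-1} (γ♭ - γ0); Hölder's inequality and
   eligibility bound each term by λ ‖d‖_1 <= λ (‖γ#‖_1 + ‖γ♭‖_1), which tends
   to 0.  The form is nonnegative since Σ_{-1,-1} is a principal block of the
   positive semidefinite Σ, so it is squeezed to 0. *)

Lemma norm1_ge0 (R : realType) (q : nat) (u : 'cV[R]_q) : 0 <= norm1 u.
Proof. exact: sumr_ge0. Qed.

Lemma norm1B (R : realType) (q : nat) (u v : 'cV[R]_q) :
  norm1 (u - v) <= norm1 u + norm1 v.
Proof.
rewrite /norm1 -big_split /=; apply: ler_sum => i _.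
by rewrite !mxE ler_normB.
Qed.

Lemma le_normInf (R : realType) (q : nat) (v : 'cV[R]_q) (i : 'I_q) :
  `|v i 0| <= normInf v.
Proof. exact: (le_bigmax _ (fun i => `|v i 0|)). Qed.

Lemma normr_dot_le (R : realType) (q : nat) (u v : 'cV[R]_q) :
  `|(u^T *m v) 0 0| <= norm1 u * normInf v.
Proof.
rewrite mxE /norm1 mulr_suml; apply: (le_trans (ler_norm_sum _ _ _)).
apply: ler_sum => i _; rewrite mxE normrM ler_wpM2l //.
exact: le_normInf.
Qed.

Lemma drsubmx_psd (R : realType) (q : nat) (S : 'M[R]_(1 + q)) (d : 'cV[R]_q) :
  (forall v : 'cV[R]_(1 + q), 0 <= (v^T *m S *m v) 0 0) ->
  0 <= (d^T *m drsubmx (S : 'M[R]_(1 + q, 1 + q)) *m d) 0 0.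
Proof.
move=> /(_ (col_mx 0 d)); rewrite tr_col_mx -{1}(submxK S).
by rewrite mul_row_block mul_row_col trmx0 !mul0mx !add0r mulmx0 add0r.
Qed.

Lemma sq_Snorm_ge0 (R : realType) (q : nat) (S : 'M[R]_(1 + q)) (d : 'cV[R]_q) :
  nonsingular_cov S -> 0 <= sq_Snorm S d.
Proof. by move=> [_ [S_psd _]]; apply: drsubmx_psd. Qed.

Lemma sq_Snorm_sub_le (R : realType) (q : nat) (S : 'M[R]_(1 + q))
    (g1 g2 : 'cV[R]_q) (lam : R) :
  0 <= lam ->
  normInf (Sig_mm S *m (g1 - gamma0 S)) <= lam ->
  normInf (Sig_mm S *m (g2 - gamma0 S)) <= lam ->
  sq_Snorm S (g1 - g2) <= 2 * (lam * norm1 g1 + lam * norm1 g2).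
Proof.
move=> lam_ge0 bound1 bound2; set d := g1 - g2.
set r1 := Sig_mm S *m (g1 - gamma0 S); set r2 := Sig_mm S *m (g2 - gamma0 S).
have split_form : sq_Snorm S d = (d^T *m r1) 0 0 - (d^T *m r2) 0 0.
  rewrite /sq_Snorm -mulmxA.
  have -> : Sig_mm S *m d = r1 - r2 by rewrite -mulmxBr opprB addrA subrK.
  by rewrite mulmxBr [LHS]mxE [X in _ + X]mxE.
have holder (r : 'cV[R]_q) : normInf r <= lam -> `|(d^T *m r) 0 0| <= norm1 d * lam.
  by move=> r_le; apply: (le_trans (normr_dot_le _ _)); rewrite ler_wpM2l ?norm1_ge0.
have d_le : norm1 d * lam <= (norm1 g1 + norm1 g2) * lam by rewrite ler_wpM2r ?norm1B.
rewrite split_form; apply: (le_trans (ler_norm _)); apply: (le_trans (ler_normB _ _)).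
have := holder _ bound1; have := holder _ bound2; lra.
Qed.

Theorem lemma3p1 (R : realType) (q : nat -> nat)
    (S : forall n, 'M[R]_(1 + q n))
    (lam : nat -> R) (gs gf : forall n, 'cV[R]_(q n)) :
  (forall n, nonsingular_cov (S n)) ->
  (forall n, 0 < lam n) ->
  eligible S gs lam -> eligible S gf lam ->
  (fun n => sq_Snorm (S n) (gs n - gf n)) @ \oo -->  0.
Proof.
move=> S_cov lam_gt0 [_ [gs_bound gs_cvg]] [_ [gf_bound gf_cvg]].
apply: (@squeeze_cvgr _ _ _ _ (fun=> 0)
  (fun n => 2 * (lam n * norm1 (gs n) + lam n * norm1 (gf n)))).
- near=> n; rewrite sq_Snorm_ge0 //=.
  exact: sq_Snorm_sub_le (ltW (lam_gt0 n)) (gs_bound n) (gf_bound n).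
- exact: (@cvg_cst R^o _ nat _ _).
- by rewrite -(mulr0 2) -(addr0 0); apply: cvgMr; apply: cvgD.
Unshelve. all: end_near.
Qed.
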